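(* Let $(G,k)$ be an instance and let $u,v$ be adjacent large-dense vertices, neither incident to a multi-edge, with $N(u)\cup\{u\}=N(v)\cup\{v\}$. Then every minimum-size feasible solution $X$ satisfies either $\{u,v\}\subseteq X$ or $\{u,v\}\cap X=\emptyset$.
   Context: Graphs are undirected, without self-loops, possibly with multi-edges. $N(v)$ is the set of vertices adjacent to $v$; $\rho(v)$ is the number of unordered pairs $\{u_1,u_2\}\subseteq N(v)$ joined by at least one edge. A vertex $v$ is large-dense if $|N(v)|>7k$ and $\rho(v)> |N(v)|(|N(v)|-1)/4$. A vertex set induces a clique if between any two distinct vertices there is exactly one edge, and a tree if it is connected and acyclic (two parallel edges form a cycle). A feasible solution is $X\subseteq V$, $|X|\le k$, with every component of $G-X$ a clique or a tree. *)

From mathcomp Require Import all_boot.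
Set Implicit Arguments. Unset Strict Implicit. Unset Printing Implicit Defensive.

(* A finite multigraph on vertex type T is given by an edge-multiplicity
   function m : T -> T -> nat, m x y = number of edges between x and y.
   It must be symmetric and loopless (see [multigraph]). *)
Section Multigraph.
Variable T : finType.
Variable m : T -> T -> nat.

Definition multigraph : Prop := (forall x y, m x y = m y x) /\ (forall x, m x x = 0).

Definition adj : rel T := fun x y => 0 < m x y.

Definition nbh (v : T) : {set T} := [set u | adj v u].

Definition rho (v : T) : nat :=
  #|[set p : T * T | [&& p.1 \in nbh v, p.2 \in nbh v, enum_rank p.1 < enum_rank p.2
                        & adj p.1 p.2]]|.

Definition large_dense (k : nat) (v : T) : Prop :=
  7 * k < #|nbh v| /\ #|nbh v| * (#|nbh v| - 1) < 4 * rho v.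

Definition adj_in (S : {set T}) : rel T :=
  fun x y => [&& x \in S, y \in S & adj x y].

Definition induces_clique (S : {set T}) : Prop :=
  forall x y, x \in S -> y \in S -> x != y -> m x y = 1.

(* a cycle in G[S]: either two parallel edges, or a simple cycle of length >= 3 *)
Definition acyclic_in (S : {set T}) : Prop :=
  (forall x y, x \in S -> y \in S -> m x y <= 1) /\
  (forall s : seq T, 3 <= size s -> uniq s -> all (mem S) s -> ~~ cycle (adj_in S) s).

Definition connected_in (S : {set T}) : Prop :=
  forall x y, x \in S -> y \in S -> connect (adj_in S) x y.

Definition induces_tree (S : {set T}) : Prop := connected_in S /\ acyclic_in S.

Definition component (X : {set T}) (x : T) : {set T} :=
  [set y | connect (adj_in (~: X)) x y].

Definition feasible (k : nat) (X : {set T}) : Prop :=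
  #|X| <= k /\
  forall x, x \notin X ->
    induces_clique (component X x) \/ induces_tree (component X x).

Definition min_feasible (k : nat) (X : {set T}) : Prop :=
  feasible k X /\ forall Y : {set T}, feasible k Y -> #|X| <= #|Y|.

End Multigraph.

From mathcomp Require Import all_boot.
From mathcomp Require Import zify.
Set Implicit Arguments. Unset Strict Implicit. Unset Printing Implicit Defensive.

(* Suppose u is in a minimum solution X but v is not, and let C be the
   component of v in G - X.  If C were a tree, it would contain no triangle
   through v, so every edge inside N(v) would meet X and rho(v) <= |X| |N(v)|
   <= k |N(v)|, contradicting density since |N(v)| > 7k.  Hence C is a clique,
   so C lies in N[v] = N[u] and u is joined to C by single edges.  Then
   X - u is still feasible: u just joins the clique C, and the other
   components of G - X are untouched.  This contradicts minimality. *)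

Lemma connect_closed (T : finType) (e : rel T) (P : pred T) :
  (forall x y, P x -> e x y -> P y) -> forall x y, P x -> connect e x y -> P y.
Proof.
move=> eP x y Px /connectP [p]; elim: p x Px => [|z p IHp] x Px /=.
  by move=> _ ->.
by case/andP=> exz pz ey; exact: (IHp z (eP _ _ Px exz) pz ey).
Qed.

Lemma connect_sub_in (T : finType) (e1 e2 : rel T) (P : pred T) :
  (forall x y, P x -> e1 x y -> P y) ->
  (forall x y, P x -> e1 x y -> e2 x y) ->
  forall x y, P x -> connect e1 x y -> connect e2 x y.
Proof.
move=> e1P e12 x y Px /connectP [p]; elim: p x Px => [|z p IHp] x Px /=.
  by move=> _ ->.
case/andP=> exz pz ey; apply: (connect_trans (connect1 (e12 _ _ Px exz))).
exact: (IHp z (e1P _ _ Px exz) pz ey).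
Qed.

Arguments connect_closed {T e P} eP {x y}.
Arguments connect_sub_in {T e1 e2} P.

Section Multigraph.
Variables (T : finType) (m : T -> T -> nat).
Hypothesis m_sym : forall x y, m x y = m y x.
Hypothesis m_irr : forall x, m x x = 0.

Lemma adj_sym x y : adj m x y -> adj m y x.
Proof. by rewrite /adj m_sym. Qed.

Lemma adj_neq x y : adj m x y -> x != y.
Proof. by apply: contraTneq => ->; rewrite /adj m_irr. Qed.

Lemma mem_component (X : {set T}) x : x \notin X -> x \in component m X x.
Proof. by rewrite inE connect0. Qed.

Lemma component_notin (X : {set T}) x z : z \in component m X x -> x \notin X -> z \notin X.
Proof.
rewrite inE => xz xX; apply: (connect_closed (P := fun z => z \notin X) _ xX xz) => a b _.
by case/and3P=> _; rewrite inE.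
Qed.

Lemma component_adj (X : {set T}) x z w :
  x \notin X -> z \in component m X x -> w \notin X -> adj m z w ->
  w \in component m X x.
Proof.
move=> xX zC wX zw; have zX := component_notin zC xX.
move: zC; rewrite !inE => xz; apply: (connect_trans xz); apply: connect1.
by rewrite /adj_in !inE zX wX.
Qed.

Lemma rho_le_cover v (X : {set T}) :
  (forall a b, a \in nbh m v -> b \in nbh m v -> enum_rank a < enum_rank b ->
     adj m a b -> (a \in X) || (b \in X)) ->
  rho m v <= #|X| * #|nbh m v|.
Proof.
move=> cover; rewrite /rho; set P := [set p : T * T | _].
(* orient each edge so that its first endpoint lies in X *)
pose f p : T * T := if p.1 \in X then p else (p.2, p.1).
have f_inj : {in P &, injective f}.
  move=> [a b] [a' b']; rewrite !inE /f /=.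
  case/and4P=> _ _ ab _ /and4P [_ _ ab' _].
  case: (a \in X); case: (a' \in X) => //= -[e1 e2]; subst => //;
    by move: (ltn_trans ab ab'); rewrite ltnn.
rewrite -(card_in_imset f_inj) -cardsX; apply: subset_leq_card.
apply/subsetP=> q /imsetP [[a b]]; rewrite inE /= => /and4P [Na Nb ab adj_ab] ->.
have := cover a b Na Nb ab adj_ab; rewrite /f /=.
by case: (boolP (a \in X)) => aX /=; rewrite inE /= ?aX ?Nb // => ->.
Qed.

Lemma dense_component_clique k (X : {set T}) v :
  large_dense m k v -> feasible m k X -> v \notin X ->
  induces_clique m (component m X v).
Proof.
move=> [big dense] [cardX feasX] vX.
case: (feasX v vX) => // -[_ [_ no_cycle]]; exfalso.
have vC := mem_component vX.
have cover a b : a \in nbh m v -> b \in nbh m v -> enum_rank a < enum_rank b ->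
    adj m a b -> (a \in X) || (b \in X).
  rewrite !inE => va vb ab adj_ab; apply/negPn/negP; rewrite negb_or.
  case/andP=> aX bX.
  have aC := component_adj vX vC aX va; have bC := component_adj vX vC bX vb.
  have a_neq_b : a != b by apply: contraTneq ab => ->; rewrite ltnn.
  have triangle_uniq : uniq [:: v; a; b].
    by rewrite /= !inE negb_or (adj_neq va) (adj_neq vb) a_neq_b.
  have triangle_in_C : all (mem (component m X v)) [:: v; a; b].
    by rewrite /= vC aC bC.
  have := no_cycle [:: v; a; b] isT triangle_uniq triangle_in_C.
  by rewrite /= /adj_in vC aC bC va adj_ab (adj_sym vb).
have := rho_le_cover cover; nia.
Qed.

Section RemoveFromSolution.
Variables (k : nat) (X : {set T}) (u v : T).
Hypothesis vX : v \notin X.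
Let C := component m X v.
Hypothesis nbh_u : forall w, adj m u w -> w \notin X -> w \in C.

Lemma component_setD1_closed z w :
  z \in u |: C -> adj_in m (~: (X :\ u)) z w -> w \in u |: C.
Proof.
rewrite in_setU1 => zD /and3P [_ wY zw].
rewrite in_setU1; case: (eqVneq w u) => //= wu.
rewrite !inE wu /= in wY.
case/orP: zD => [/eqP zu | zC]; first by apply: nbh_u wY; rewrite -zu.
exact: component_adj zC wY zw.
Qed.

Lemma component_setD1_coclosed z w :
  z \notin u |: C -> adj_in m (~: (X :\ u)) z w -> w \notin u |: C.
Proof.
rewrite in_setU1 negb_or => /andP [zu zC] /and3P [zY _ zw].
rewrite !inE zu /= in zY; rewrite in_setU1 negb_or; apply/andP; split.
  by apply: contra zC => /eqP wu; apply: nbh_u zY; rewrite -wu adj_sym.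
by apply: contra zC => wC; exact: component_adj wC zY (adj_sym zw).
Qed.

Lemma component_setD1_out x :
  x \notin u |: C -> component m (X :\ u) x = component m X x.
Proof.
move=> xD; apply/setP=> y; rewrite !inE; apply/idP/idP.
  apply: (connect_sub_in (fun z => z \notin u |: C)) => //.
    exact: component_setD1_coclosed.
  move=> z w zD zw; have wD := component_setD1_coclosed zD zw.
  have neq_u a : a \notin u |: C -> a != u.
    by apply: contraNneq => ->; rewrite setU11.
  case/and3P: zw; rewrite !in_setC !in_setD1 (neq_u _ zD) (neq_u _ wD) /=.
  by move=> zX wX zw; rewrite /adj_in !in_setC zX wX.
apply: (connect_sub_in predT) => // z w _.
by rewrite /adj_in !inE => /and3P [/negPf -> /negPf -> ->]; rewrite !andbF.
Qed.

Lemma feasible_setD1 :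
  feasible m k X -> induces_clique m C -> (forall b, b \in C -> m u b = 1) ->
  feasible m k (X :\ u).
Proof.
move=> [cardX feasX] C_clique uC; split.
  by rewrite (leq_trans _ cardX) // subset_leq_card // subD1set.
move=> x xY; case: (boolP (x \in u |: C)) => xD; last first.
  have xX : x \notin X.
    by move: xY xD; rewrite !inE negb_or => /nandP [/negbNE/eqP->|]; rewrite ?eqxx.
  by rewrite component_setD1_out //; exact: feasX.
left=> a b; rewrite !inE => xa xb ab.
move: (connect_closed component_setD1_closed xD xa).
move: (connect_closed component_setD1_closed xD xb).
rewrite !in_setU1 => /orP [/eqP bu | bC] /orP [/eqP au | aC].
- by rewrite au bu eqxx in ab.
- by rewrite bu m_sym uC.
- by rewrite au uC.
- exact: C_clique.
Qed.

End RemoveFromSolution.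

Lemma dense_twin_min_feasible k (X : {set T}) u v :
  large_dense m k v -> (forall w, m u w <= 1) ->
  u |: nbh m u = v |: nbh m v -> min_feasible m k X -> u \in X -> v \in X.
Proof.
move=> dense_v u_simple twins [feasX minX] uX; apply/negPn/negP=> vX.
set C := component m X v.
have C_clique : induces_clique m C := dense_component_clique dense_v feasX vX.
have nbh_u w : adj m u w -> w \notin X -> w \in C.
  move=> uw wX; have : w \in v |: nbh m v by rewrite -twins !inE uw orbT.
  rewrite in_setU1 inE => /orP [/eqP -> | vw]; first exact: mem_component.
  exact: component_adj (mem_component vX) wX vw.
have uC b : b \in C -> m u b = 1.
  move=> bC; apply/eqP; rewrite eqn_leq u_simple /=.
  have : b \in v |: nbh m v.
    rewrite in_setU1 inE; case: (eqVneq b v) => //= bv.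
    by rewrite /adj (C_clique v b) // ?mem_component // eq_sym.
  rewrite -twins in_setU1 inE => /orP [/eqP bu | //].
  by move: (component_notin bC vX); rewrite bu uX.
have := minX _ (feasible_setD1 vX nbh_u feasX C_clique uC).
by rewrite (cardsD1 u X) uX; lia.
Qed.

End Multigraph.

Theorem mainTheorem14 (T : finType) (m : T -> T -> nat) (k : nat) (u v : T) :
  multigraph m ->
  adj m u v ->
  large_dense m k u -> large_dense m k v ->
  (forall w, m u w <= 1) -> (forall w, m v w <= 1) ->
  u |: nbh m u = v |: nbh m v ->
  forall X : {set T}, min_feasible m k X ->
    [set u; v] \subset X \/ [disjoint [set u; v] & X].
Proof.
move=> [m_sym m_irr] _ dense_u dense_v u_simple v_simple twins X minX.
have uXvX : (u \in X) = (v \in X).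
  apply/idP/idP.
  - exact: (dense_twin_min_feasible m_sym m_irr) dense_v u_simple twins minX.
  - exact: (dense_twin_min_feasible m_sym m_irr) dense_u v_simple (esym twins) minX.
case: (boolP (u \in X)) => uX; [left | right].
- by rewrite subUset !sub1set uX -uXvX uX.
- by rewrite disjoints_subset subUset !sub1set !inE uX -uXvX uX.
Qed.
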